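(* Let $\mathcal{A}$ be a pOC with state set $Q$ whose underlying chain $\mathcal{X}$ is strongly connected, with trend $t\ge0$. Assume $[p{\downarrow}]>0$ for all $p\in Q$. Let $v$ be a potential and $|v|=v_{\max}-v_{\min}$. Let $c^{(0)}\ge1$ and let $p^{(0)}\in Q$ satisfy $v_{p^{(0)}}=v_{\max}$. Let $b\in\mathbb{N}$. Then $$\mathcal{P}\bigl(\exists i: c^{(i)}\ge b\ \wedge\ \forall j\le i: c^{(j)}\ge1 \ \big|\ \mathrm{Run}(p^{(0)}(c^{(0)}))\bigr)\ \ge\ \frac{1}{b+1+|v|},$$ where $c^{(i)}$ denotes the counter value of the $i$-th configuration of a run.
   Context: A pOC is $\mathcal{A}=(Q,\delta^{=0},\delta^{>0},P^{=0},P^{>0})$ with the following components. - $\delta^{>0}\subseteq Q\times\{-1,0,1\}\times Q$ are the positive rules and $\delta^{=0}\subseteq Q\times\{0,1\}\times Q$ are the zero rules. Every state has both kinds of outgoing rule. - $P^{>0}$ and $P^{=0}$ are positive probability distributions over the outgoing rules of each state. $\mathcal{M}_\mathcal{A}$ is the Markov chain on configurations $p(i)$ with the following transitions: - $p(0)\to q(c)$ with probability $P^{=0}(p,c,q)$; - for $i\ge1$, $p(i)\to q(i+c)$ with probability $P^{>0}(p,c,q)$. $\mathrm{Run}(r(c))$ is the set of runs starting in $r(c)$. $[p{\downarrow}]$ is the probability that a run from $p(1)$ eventually reaches counter value $0$. $\mathcal{X}$ is the finite Markov chain on $Q$ with transition matrix $A_{pq}=\sum_cP^{>0}(p,c,q)$.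 With $\alpha$ its invariant distribution and $s_p=\sum_{(p,c,q)\in\delta^{>0}}P^{>0}(p,c,q)c$, the trend is $t=\alpha s$. A potential is $v\in\mathbb{R}^Q$ with $s+Av=v+\mathbf{1}t$. $v_{\max}$ and $v_{\min}$ are its largest and smallest components. *)

From HB Require Import structures.
From mathcomp Require Import all_boot all_order all_algebra.
From mathcomp Require Import classical_sets reals.
Set Implicit Arguments. Unset Strict Implicit. Unset Printing Implicit Defensive.
Import Order.TTheory GRing.Theory Num.Theory.
Local Open Scope ring_scope.

Section POC.
Variables (R : realType) (Q : finType).
(* A pOC is given by its two families of rule probabilities:
   Pz p c q = P^{=0}(p,c,q)  (zero rules),   Pp p c q = P^{>0}(p,c,q) (positive rules).
   The rule sets delta^{=0}, delta^{>0} are the supports. *)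
Variables (Pz Pp : Q -> int -> Q -> R).

Definition pos_dirs : seq int := [:: (-1)%R; 0%R; 1%R].
Definition zero_dirs : seq int := [:: 0%R; 1%R].

Definition is_pOC : Prop :=
  (forall p c q, 0 <= Pz p c q) /\
  [/\ (forall p c q, 0 <= Pp p c q),
      (forall p c q, Pz p c q != 0 -> c \in zero_dirs),
      (forall p c q, Pp p c q != 0 -> c \in pos_dirs),
      (forall p, \sum_(q : Q) \sum_(c <- zero_dirs) Pz p c q = 1) &
      (forall p, \sum_(q : Q) \sum_(c <- pos_dirs) Pp p c q = 1)].

Definition shift (i : nat) (c : int) : nat := `|(i%:Z + c)%R|%N.

Definition succ_exp (g : Q -> nat -> R) (p : Q) (i : nat) : R :=
  if i is 0 then \sum_(q : Q) \sum_(c <- zero_dirs) Pz p c q * g q (shift 0 c)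
  else \sum_(q : Q) \sum_(c <- pos_dirs) Pp p c q * g q (shift i c).

(* Probability, from configuration p(i), of the event
   "exists k <= n, T(x_k) /\ forall j <= k, S(x_j)" (finite horizon n). *)
Fixpoint until_n (S T : Q -> nat -> bool) (n : nat) (p : Q) (i : nat) : R :=
  match n with
  | 0 => if S p i && T p i then 1 else 0
  | n'.+1 => if S p i && T p i then 1
             else if S p i then succ_exp (until_n S T n') p i else 0
  end.

(* Probability of "exists k, T(x_k) /\ forall j <= k, S(x_j)" over Run(p(i)):
   the limit (= supremum) of the finite-horizon probabilities. *)
Definition until_prob (S T : Q -> nat -> bool) (p : Q) (i : nat) : R :=
  sup (range (fun n => until_n S T n p i)).

Definition term_prob (p : Q) : R :=
  until_prob (fun _ _ => true) (fun _ i => i == 0%N) p 1.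

Definition Amat (p q : Q) : R := \sum_(c <- pos_dirs) Pp p c q.

Definition strongly_connected : Prop :=
  forall p q : Q, connect (fun x y => 0 < Amat x y) p q.

Definition invariant_dist (alpha : Q -> R) : Prop :=
  [/\ (forall q, 0 <= alpha q), \sum_(q : Q) alpha q = 1 &
      forall q, \sum_(p : Q) alpha p * Amat p q = alpha q].

Definition svec (p : Q) : R := \sum_(q : Q) \sum_(c <- pos_dirs) Pp p c q * c%:~R.

Definition trend (alpha : Q -> R) : R := \sum_(p : Q) alpha p * svec p.

Definition is_potential (t : R) (v : Q -> R) : Prop :=
  forall p, svec p + \sum_(q : Q) Amat p q * v q = v p + t.

End POC.

Definition vmax (R : realType) (Q : finType) (v : Q -> R) (x0 : Q) : R :=
  \big[Num.max/v x0]_(q : Q) v q.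
Definition vmin (R : realType) (Q : finType) (v : Q -> R) (x0 : Q) : R :=
  \big[Num.min/v x0]_(q : Q) v q.

From HB Require Import structures.
From mathcomp Require Import all_boot all_order all_algebra.
From mathcomp Require Import classical_sets reals.
From mathcomp Require Import ring lra zify.
Import Order.TTheory GRing.Theory Num.Theory.
Set Implicit Arguments.
Unset Strict Implicit.
Local Open Scope ring_scope.

(* Stop the chain when the counter leaves the window [1, b - 1].  Since the
   trend is nonnegative, min(c, b) + v_p is a submartingale of the stopped
   chain, so its expectation at any time n is at least 1 + v_max, and at most
   v_max + b * P(counter >= b by time n) + (b - 1) * P(not stopped by time n).
   The chain is stopped almost surely: a configuration of the window from
   which it is never stopped would, shifted down, give a state p with
   [p down] = 0.  By finiteness of the window the last probability then decays
   geometrically, so b * P(counter reaches b) >= 1. *)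

Lemma shiftE i c : (0 < i)%N -> c \in pos_dirs -> (shift i c)%:Z = i%:Z + c.
Proof. by rewrite /pos_dirs !inE /shift => hi /or3P [] /eqP ->; lia. Qed.

Lemma shiftDl k m c :
  (0 < k)%N -> c \in pos_dirs -> shift (k + m) c = (shift k c + m)%N.
Proof. by rewrite /pos_dirs !inE /shift => hk /or3P [] /eqP ->; lia. Qed.

Lemma fin_eventually (T : finType) (P : nat -> T -> Prop) :
  (forall x m n, (m <= n)%N -> P m x -> P n x) -> (forall x, exists n, P n x) ->
  exists N, forall x, P N x.
Proof.
move=> mono /fin_all_exists [n Hn]; exists (\max_x n x) => x.
exact: mono (leq_bigmax x) (Hn x).
Qed.

Lemma expr_Bernoulli_le1 (R : realDomainType) (x : R) k :
  0 <= x <= 1 -> x ^+ k * (1 + k%:R * (1 - x)) <= 1.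
Proof.
move=> /andP [x0 x1]; elim: k => [|k IH]; first by rewrite expr0 mul0r addr0 mul1r.
have xk0 : 0 <= x ^+ k := exprn_ge0 k x0.
have : 0 <= x ^+ k * ((1 - x) * (1 - x) * (k%:R + 1)).
  by rewrite !mulr_ge0 // ?subr_ge0 // addr_ge0.
by rewrite exprS -natr1; nra.
Qed.

Lemma exists_expr_le (R : archiRealFieldType) (x e : R) :
  0 <= x -> x < 1 -> 0 < e -> exists k, x ^+ k <= e.
Proof.
move=> x0 x1 e0.
have d0 : 0 < e * (1 - x) by rewrite mulr_gt0 // subr_gt0.
exists (Num.bound (e * (1 - x))^-1).
set k := Num.bound _.
have /ltW : (e * (1 - x))^-1 < k%:R by rewrite archi_boundP // invr_ge0 ltW.
rewrite -(ler_pM2r d0) mulVf ?gt_eqF // => hk.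
have := expr_Bernoulli_le1 k (x:=x); rewrite x0 ltW //= => hB.
have xk0 : 0 <= x ^+ k := exprn_ge0 k x0.
nra.
Qed.

Section StoppedChain.
Variables (R : realType) (Q : finType) (Pz Pp : Q -> int -> Q -> R).
Hypothesis HP : is_pOC Pz Pp.

Lemma Pp_ge0 p c q : 0 <= Pp p c q.
Proof. by case: HP => _ []. Qed.

Lemma Pp_support p c q : Pp p c q != 0 -> c \in pos_dirs.
Proof. by case: HP => _ [_ _ + _ _]; apply. Qed.

Lemma Pp_row_sum p : \sum_(q : Q) \sum_(c <- pos_dirs) Pp p c q = 1.
Proof. by case: HP => _ [_ _ _ _ +]; apply. Qed.

Lemma eq_succ_exp f g : (forall q j, f q j = g q j) ->
  forall p i, succ_exp Pz Pp f p i = succ_exp Pz Pp g p i.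
Proof.
by move=> fg p [|i] /=; apply: eq_bigr => q _; apply: eq_bigr => c _; rewrite fg.
Qed.

Lemma succ_exp_lin a f g p i :
  succ_exp Pz Pp (fun q j => a * f q j + g q j) p i =
  a * succ_exp Pz Pp f p i + succ_exp Pz Pp g p i.
Proof.
by case: i => [|i] /=; rewrite mulr_sumr -big_split; apply: eq_bigr => q _;
  rewrite mulr_sumr -big_split; apply: eq_bigr => c _; rewrite mulrDr mulrCA.
Qed.

Lemma succ_exp_cst k p i : succ_exp Pz Pp (fun _ _ => k) p i = k.
Proof.
case: HP => _ [_ _ _ Hz _]; case: i => [|i] /=.
  by rewrite -[RHS]mul1r -(Hz p) mulr_suml; apply: eq_bigr => q _; rewrite mulr_suml.
by rewrite -[RHS]mul1r -(Pp_row_sum p) mulr_suml; apply: eq_bigr => q _; rewrite mulr_suml.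
Qed.

Lemma ler_succ_exp f g p i : (forall q j, f q j <= g q j) ->
  succ_exp Pz Pp f p i <= succ_exp Pz Pp g p i.
Proof.
have [Pz_ge0 _] := HP.
by move=> fg; case: i => [|i] /=; apply: ler_sum => q _; apply: ler_sum => c _;
  rewrite ler_wpM2l ?Pp_ge0.
Qed.

Lemma succ_exp_eq0 f p i : (0 < i)%N ->
  (forall q c, Pp p c q != 0 -> f q (shift i c) = 0) -> succ_exp Pz Pp f p i = 0.
Proof.
case: i => // i _ Hf /=; apply: big1 => q _; apply: big1_seq => c _.
by case: (eqVneq (Pp p c q) 0) => [->|/Hf ->]; rewrite ?mul0r ?mulr0.
Qed.

Lemma succ_exp_eq1 f p i q c : (0 < i)%N -> (forall q j, f q j <= 1) ->
  succ_exp Pz Pp f p i = 1 -> Pp p c q != 0 -> f q (shift i c) = 1.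
Proof.
case: i => // i _ f1 Hs hne.
have slack_ge0 q' c' : 0 <= Pp p c' q' * (1 - f q' (shift i.+1 c')).
  by rewrite mulr_ge0 ?Pp_ge0 // subr_ge0.
have : \sum_q' \sum_(c' <- pos_dirs) Pp p c' q' * (1 - f q' (shift i.+1 c')) = 0.
  rewrite -[RHS](subrr 1) -[X in _ = X - _](Pp_row_sum p) -[X in _ = _ - X]Hs /= -sumrB.
  by apply: eq_bigr => q' _; rewrite -sumrB; apply: eq_bigr => c' _; rewrite mulrBr mulr1.
have inner_ge0 q' : 0 <= \sum_(c' <- pos_dirs) Pp p c' q' * (1 - f q' (shift i.+1 c')).
  by apply: sumr_ge0 => c' _; exact: slack_ge0.
move=> /(psumr_eq0P (fun q' _ => inner_ge0 q')) /(_ q isT) /eqP.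
rewrite psumr_eq0 => [/allP /(_ c (Pp_support hne))|c' _]; last exact: slack_ge0.
by rewrite /= mulf_eq0 (negbTE hne) subr_eq0 => /eqP <-.
Qed.

Definition stopped (b i : nat) : bool := (i == 0)%N || (b <= i)%N.

Lemma not_stopped b i : ~~ stopped b i = (0 < i < b)%N.
Proof. by rewrite /stopped negb_or -ltnNge lt0n. Qed.

Fixpoint stopped_exp (b n : nat) (g : Q -> nat -> R) (p : Q) (i : nat) : R :=
  match n with
  | 0 => g p i
  | n'.+1 => if stopped b i then g p i else succ_exp Pz Pp (stopped_exp b n' g) p i
  end.

Lemma stopped_exp_stopped b n g p i : stopped b i -> stopped_exp b n g p i = g p i.
Proof. by case: n => //= n ->. Qed.

Lemma eq_stopped_exp b n f g : (forall q j, f q j = g q j) ->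
  forall p i, stopped_exp b n f p i = stopped_exp b n g p i.
Proof.
move=> fg; elim: n => [|n IH] p i //=.
by case: ifP => _; [exact: fg | exact: eq_succ_exp].
Qed.

Lemma stopped_exp_lin b n a f g p i :
  stopped_exp b n (fun q j => a * f q j + g q j) p i =
  a * stopped_exp b n f p i + stopped_exp b n g p i.
Proof.
elim: n p i => [|n IH] p i //=.
by case: ifP => // _; rewrite (eq_succ_exp IH) succ_exp_lin.
Qed.

Lemma stopped_exp_cst b n k p i : stopped_exp b n (fun _ _ => k) p i = k.
Proof.
elim: n p i => [|n IH] p i //=.
by case: ifP => // _; rewrite (eq_succ_exp IH) succ_exp_cst.
Qed.

Lemma stopped_exp_scale b n a f p i :
  stopped_exp b n (fun q j => a * f q j) p i = a * stopped_exp b n f p i.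
Proof.
rewrite -[RHS]addr0 -(stopped_exp_cst b n 0 p i) -stopped_exp_lin.
by apply: eq_stopped_exp => q j; rewrite addr0.
Qed.

Lemma ler_stopped_exp b n f g : (forall q j, f q j <= g q j) ->
  forall p i, stopped_exp b n f p i <= stopped_exp b n g p i.
Proof.
move=> fg; elim: n => [|n IH] p i //=.
by case: ifP => _; [exact: fg | exact: ler_succ_exp].
Qed.

Lemma stopped_expD b m n g p i :
  stopped_exp b (m + n) g p i = stopped_exp b m (stopped_exp b n g) p i.
Proof.
elim: m p i => [|m IH] p i //=.
by case: ifP => hs; [rewrite stopped_exp_stopped | exact: eq_succ_exp].
Qed.

Lemma stopped_exp_unit b n f p i :
  (forall q j, 0 <= f q j <= 1) -> 0 <= stopped_exp b n f p i <= 1.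
Proof.
move=> f01; apply/andP; split.
  by rewrite -(stopped_exp_cst b n 0 p i); apply: ler_stopped_exp => q j; case/andP: (f01 q j).
by rewrite -(stopped_exp_cst b n 1 p i); apply: ler_stopped_exp => q j; case/andP: (f01 q j).
Qed.

Definition reached (b : nat) (q : Q) (j : nat) : R :=
  if (0 < j)%N && (b <= j)%N then 1 else 0.

Definition alive (b : nat) (q : Q) (j : nat) : R := if stopped b j then 0 else 1.

Lemma reached_unit b q j : 0 <= reached b q j <= 1.
Proof. by rewrite /reached; case: ifP; rewrite ?lexx ?ler01. Qed.

Lemma alive_unit b q j : 0 <= alive b q j <= 1.
Proof. by rewrite /alive; case: ifP; rewrite ?lexx ?ler01. Qed.

Lemma until_n_stopped_exp b n p i :
  until_n Pz Pp (fun _ i => (1 <= i)%N) (fun _ i => (b <= i)%N) n p i =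
  stopped_exp b n (reached b) p i.
Proof.
elim: n p i => [|n IH] p i //=.
by rewrite (eq_succ_exp IH) /stopped /reached; case: i => [|i] //=; case: ifP.
Qed.

Lemma stopped_exp_reached_le_until_prob b n p i :
  stopped_exp b n (reached b) p i <=
  until_prob Pz Pp (fun _ i => (1 <= i)%N) (fun _ i => (b <= i)%N) p i.
Proof.
rewrite -until_n_stopped_exp; apply: ub_le_sup; last by exists n.
exists 1 => _ [m _ <-]; rewrite until_n_stopped_exp.
by case/andP: (stopped_exp_unit b m p i (@reached_unit b)).
Qed.

Definition counter_potential (b : nat) (v : Q -> R) (q : Q) (j : nat) : R :=
  (minn j b)%:R + v q.

Lemma succ_exp_counter_potential b v t p i :
  is_potential Pp t v -> (0 < i < b)%N ->
  succ_exp Pz Pp (counter_potential b v) p i = counter_potential b v p i + t.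
Proof.
move=> Hpot /andP [hi hib].
have cpE q c (hc : c \in pos_dirs) :
    counter_potential b v q (shift i c) = i%:R + c%:~R + v q.
  have := shiftE hi hc; rewrite /counter_potential => hs.
  rewrite (minn_idPl _) ?pmulrn ?hs ?intrD -?pmulrn //.
  by move: hc hs; rewrite !inE => /or3P [] /eqP ->; lia.
case: i hi hib cpE => // i _ hib cpE /=.
under eq_bigr => q _ do under eq_big_seq => c hc do
  rewrite cpE // mulrDr mulrDr.
under eq_bigr => q _ do rewrite !big_split /=.
rewrite !big_split /= -/(svec Pp p) /counter_potential (minn_idPl (ltnW hib)).
have -> : \sum_q \sum_(c <- pos_dirs) Pp p c q * (i.+1)%:R = (i.+1)%:R.
  by rewrite -[RHS]mul1r -(Pp_row_sum p) mulr_suml; apply: eq_bigr => q _; rewrite mulr_suml.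
have -> : \sum_q \sum_(c <- pos_dirs) Pp p c q * v q = \sum_q Amat Pp p q * v q.
  by apply: eq_bigr => q _; rewrite mulr_suml.
by rewrite -addrA Hpot addrA.
Qed.

Lemma counter_potential_le_stopped_exp b v t n p i :
  0 <= t -> is_potential Pp t v ->
  counter_potential b v p i <= stopped_exp b n (counter_potential b v) p i.
Proof.
move=> ht Hpot; elim: n p i => [|n IH] p i //=.
case: ifP => hs //; move/negbT: hs; rewrite not_stopped => hi.
apply: le_trans (ler_succ_exp _ _ IH).
by rewrite (succ_exp_counter_potential p Hpot hi) lerDl.
Qed.

Lemma counter_potential_le b v vM q j : (0 < b)%N -> (forall q, v q <= vM) ->
  counter_potential b v q j <=
  b%:R * reached b q j + ((b%:R - 1) * alive b q j + vM).
Proof.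
move=> hb vle; have := vle q; rewrite /counter_potential /reached /alive /stopped.
case: (posnP j) => [-> | hj]; first by rewrite min0n /= !mulr0; lra.
case: (leqP b j) => hbj.
  by rewrite /= mulr1 mulr0; lra.
have : (j.+1)%:R <= b%:R :> R by rewrite ler_nat.
by rewrite /= -natr1 mulr0 mulr1; lra.
Qed.

Lemma stopped_exp_alive_le b n q j : stopped_exp b n (alive b) q j <= alive b q j.
Proof.
case hs: (stopped b j); first by rewrite stopped_exp_stopped.
by rewrite {2}/alive hs; case/andP: (stopped_exp_unit b n q j (alive_unit b)).
Qed.

Lemma stopped_exp_alive_nonincreasing b m n q j : (m <= n)%N ->
  stopped_exp b n (alive b) q j <= stopped_exp b m (alive b) q j.
Proof.
move/subnKC <-; rewrite stopped_expD.
by apply: ler_stopped_exp => q' j'; exact: stopped_exp_alive_le.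
Qed.

Lemma stopped_exp_alive_geometric b N th : 0 <= th ->
  (forall q j, stopped_exp b N (alive b) q j <= th * alive b q j) ->
  forall k q j, stopped_exp b (k * N) (alive b) q j <= th ^+ k * alive b q j.
Proof.
move=> th0 HN; elim=> [|k IH] q j; first by rewrite mul0n expr0 mul1r.
rewrite mulSn stopped_expD; apply: le_trans (ler_stopped_exp b N IH q j) _.
by rewrite stopped_exp_scale exprSr -mulrA ler_wpM2l ?exprn_ge0.
Qed.

Definition never_stopped (b : nat) (q : Q) (j : nat) : Prop :=
  forall n, stopped_exp b n (alive b) q j = 1.

Lemma never_stopped_window b q j : never_stopped b q j -> (0 < j < b)%N.
Proof.
move/(_ 0%N); rewrite /= /alive -not_stopped.
by case: ifP => // _ /eqP; rewrite eq_sym oner_eq0.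
Qed.

Lemma never_stopped_succ b r m c q :
  never_stopped b r m -> Pp r c q != 0 -> never_stopped b q (shift m c).
Proof.
move=> Hr hne n; have /andP [hm hmb] := never_stopped_window Hr.
have hs : stopped b m = false by apply/negbTE; rewrite not_stopped hm.
apply: (succ_exp_eq1 _ _ _ hne) => //.
  by move=> q' j'; case/andP: (stopped_exp_unit b n q' j' (alive_unit b)).
by have := Hr n.+1; rewrite /= hs.
Qed.

(* A run from [q(1)] is the run from [q(j)] shifted down by [j - 1]; it can
   reach counter 0 only by passing, unshifted, through a never stopped
   configuration at level [j - 1], which is excluded by induction on [j]. *)
Lemma no_never_stopped b : (forall p, 0 < term_prob Pz Pp p) ->
  forall j q, ~ never_stopped b q j.
Proof.
move=> Hterm; elim/ltn_ind => j IHj q Hq.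
have /andP [hj _] := never_stopped_window Hq.
have no_hit n r k : (0 < k)%N -> never_stopped b r (k + j.-1) ->
    until_n Pz Pp (fun _ _ => true) (fun _ i => i == 0%N) n r k = 0.
  elim: n r k => [|n IHn] r k hk Hr /=; rewrite eqn0Ngt hk //=.
  apply: succ_exp_eq0 => // q' c hne.
  have := never_stopped_succ Hr hne; rewrite shiftDl ?(Pp_support hne) //.
  case: (posnP (shift k c)) => [-> | hpos] Hq'; last exact: IHn.
  by case: (IHj j.-1 _ q' Hq'); rewrite ltn_predL.
have : term_prob Pz Pp q <= 0.
  apply: ge_sup; first by exists (until_n Pz Pp (fun _ _ => true) (fun _ i => i == 0%N) 0 q 1), 0%N.
  by move=> _ [n _ <-]; rewrite no_hit // add1n prednK.
by rewrite leNgt Hterm.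
Qed.

Lemma exists_alive_lt1 b : (forall p, 0 < term_prob Pz Pp p) ->
  forall q j, exists n, stopped_exp b n (alive b) q j < 1.
Proof.
move=> Hterm q j; apply: boolp.contrapT => Hne.
apply: (@no_never_stopped b Hterm j q) => n; apply/eqP; rewrite eq_le.
case/andP: (stopped_exp_unit b n q j (alive_unit b)) => _ -> /=.
by rewrite leNgt; apply/negP => lt1; apply: Hne; exists n.
Qed.

Lemma alive_vanishes b : (forall p, 0 < term_prob Pz Pp p) ->
  forall e, 0 < e -> exists n, forall q j, stopped_exp b n (alive b) q j <= e.
Proof.
move=> Hterm e he.
have [N HN] : exists N, forall x : Q * 'I_b, stopped_exp b N (alive b) x.1 x.2 < 1.
  apply: fin_eventually => [x m n mn | x]; last exact: exists_alive_lt1.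
  exact/le_lt_trans/stopped_exp_alive_nonincreasing.
pose th := \big[Num.max/0]_(x : Q * 'I_b) stopped_exp b N (alive b) x.1 x.2.
have th0 : 0 <= th by exact: bigmax_ge_id.
have th1 : th < 1 by apply/bigmax_ltP.
have step q j : stopped_exp b N (alive b) q j <= th * alive b q j.
  rewrite /alive; case: ifP => hs; first by rewrite mulr0 stopped_exp_stopped // /alive hs.
  move/negbT: hs; rewrite not_stopped mulr1 => /andP [_ hjb].
  exact: (le_bigmax _ _ (q, Ordinal hjb)).
have [k hk] := exists_expr_le th0 th1 he.
exists (k * N)%N => q j.
apply: le_trans (stopped_exp_alive_geometric th0 step k q j) _.
apply: le_trans hk; rewrite ler_piMr ?exprn_ge0 //.
by case/andP: (alive_unit b q j).
Qed.

Lemma until_prob_reach_lower_bound b c0 p0 v t :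
  (0 < b)%N -> (0 < c0)%N -> 0 <= t -> is_potential Pp t v ->
  (forall q, v q <= v p0) -> (forall p, 0 < term_prob Pz Pp p) ->
  1 <= b%:R * until_prob Pz Pp (fun _ i => (1 <= i)%N) (fun _ i => (b <= i)%N) p0 c0.
Proof.
move=> hb hc0 ht Hpot v_le Hterm; apply/ler_addgt0Pr => e he.
have b0 : 0 < b%:R :> R by rewrite ltr0n.
have [n Hn] := alive_vanishes b Hterm (divr_gt0 he b0).
have W_le_u := stopped_exp_reached_le_until_prob b n p0 c0.
have bd : b%:R * (e / b%:R) = e by rewrite mulrC divfK ?gt_eqF.
have := counter_potential_le_stopped_exp b n p0 c0 ht Hpot.
have := ler_stopped_exp b n (fun q j => counter_potential_le q j hb v_le) p0 c0.
rewrite !stopped_exp_lin stopped_exp_cst /counter_potential => upper lower.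
have c1 : 1 <= (minn c0 b)%:R :> R by rewrite ler1n leq_min hb hc0.
have b1 : 1 <= b%:R :> R by rewrite ler1n.
have V0 : 0 <= stopped_exp b n (alive b) p0 c0.
  by case/andP: (stopped_exp_unit b n p0 c0 (alive_unit b)).
have bW := ler_wpM2l (ltW b0) W_le_u.
have bV : (b%:R - 1) * stopped_exp b n (alive b) p0 c0 <= e - e / b%:R.
  apply: le_trans (ler_wpM2l _ (Hn p0 c0)) _; first by rewrite subr_ge0.
  by rewrite mulrBl mul1r bd.
have : 0 <= e / b%:R by rewrite divr_ge0 // ltW.
lra.
Qed.

End StoppedChain.

Unset Implicit Arguments.

Theorem mainTheorem14 (R : realType) (Q : finType) (Pz Pp : Q -> int -> Q -> R)
  (alpha v : Q -> R) (p0 : Q) (c0 b : nat) :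
  is_pOC Pz Pp ->
  strongly_connected Pp ->
  invariant_dist Pp alpha ->
  0 <= trend Pp alpha ->
  (forall p, 0 < term_prob Pz Pp p) ->
  is_potential Pp (trend Pp alpha) v ->
  (1 <= c0)%N ->
  v p0 = vmax v p0 ->
  1 / (b%:R + 1 + (vmax v p0 - vmin v p0)) <=
    until_prob Pz Pp (fun _ i => (1 <= i)%N) (fun _ i => (b <= i)%N) p0 c0.
Proof.
move=> HP _ _ ht Hterm Hpot hc0 Hp0.
set u := until_prob _ _ _ _ p0 c0.
have v_le q : v q <= v p0 by rewrite Hp0; exact: le_bigmax.
have a0 : 0 <= vmax v p0 - vmin v p0 by rewrite subr_ge0 -Hp0; exact: bigmin_le.
have reached_le_u := stopped_exp_reached_le_until_prob HP b 0 p0 c0.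
have u0 : 0 <= u by apply: le_trans reached_le_u; case/andP: (@reached_unit R Q b p0 c0).
have bu : 1 <= (b%:R + 1) * u.
  case: (posnP b) => [b0 | hb].
    rewrite /u b0 add0r mul1r.
    by have := stopped_exp_reached_le_until_prob HP 0 0 p0 c0; rewrite /= /reached hc0.
  have := until_prob_reach_lower_bound HP hb hc0 ht Hpot v_le Hterm; rewrite -/u; nra.
rewrite ler_pdivrMr; nra.
Qed.
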